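(* Let $K=2^m$ with $m\ge2$ and $L\ge2$, and let $a(t)\in\mathbb{R}^{K-1}$ evolve according to $$\frac{da_i}{dt}=\frac{1}{D}b_ia_i^{\frac{2L}{L+1}},\qquad b_i=\sum_{j=1}^{K-1}\Psi_{ij}e^{-(\Psi a)_j},\quad D=1+\sum_{j=1}^{K-1}e^{-(\Psi a)_j}.$$ Suppose $a(0)$ has $a_i(0)=\gamma_0$ for odd $i$ and $a_i(0)=\delta_0$ for even $i$, with $\gamma_0,\delta_0>0$ and $\frac{\gamma_0}{\delta_0}>\big(\frac{K}{K-2}\big)^{\frac{L+1}{L-1}}$. Then for all $t\ge0$, $a(t)$ keeps this form ($a_i(t)=\gamma(t)$ for odd $i$, $a_i(t)=\delta(t)$ for even $i$), and the ratio $\gamma(t)/\delta(t)$ is strictly increasing in $t$; in particular $\gamma(t)/\delta(t)$ stays above $\big(\frac{K}{K-2}\big)^{\frac{L+1}{L-1}}$ for all $t\ge0$.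
   Context: Sylvester Hadamard matrices: $\Phi_1=(1)$, $\Phi_{2^m}=\begin{bmatrix}\Phi_{2^{m-1}}&\Phi_{2^{m-1}}\\ \Phi_{2^{m-1}}&-\Phi_{2^{m-1}}\end{bmatrix}$, $\Phi=\Phi_K$. $\Psi\in\mathbb{R}^{(K-1)\times(K-1)}$ is obtained from $1_K1_K^T-\Phi$ by deleting its first row and first column, indexed $1,\dots,K-1$. *)

From HB Require Import structures.
From mathcomp Require Import all_boot all_order all_algebra.
From mathcomp Require Import all_classical all_reals all_analysis.
Set Implicit Arguments. Unset Strict Implicit. Unset Printing Implicit Defensive.
Import Order.TTheory GRing.Theory Num.Theory.
Local Open Scope ring_scope.

Lemma sylvester_dim (m : nat) : (2 ^ m + 2 ^ m = 2 ^ m.+1)%N.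
Proof. by rewrite expnS mul2n addnn. Qed.

Fixpoint sylvester (R : pzRingType) (m : nat) : 'M[R]_(2 ^ m) :=
  match m with
  | 0 => 1%:M
  | m'.+1 =>
      castmx (sylvester_dim m', sylvester_dim m')
        (block_mx (sylvester R m') (sylvester R m')
                  (sylvester R m') (- sylvester R m'))
  end.

Lemma succ_ord_proof (m : nat) (i : 'I_(2 ^ m).-1) : (i.+1 < 2 ^ m)%N.
Proof.
have h : (i < (2 ^ m).-1)%N := ltn_ord i.
have p : (0 < 2 ^ m)%N by rewrite expn_gt0.
move: (nat_of_ord i) h => k; by rewrite -{2}(prednK p) ltnS.
Qed.

(* index i (0-based, paper index i+1) of Psi  |->  index i+1 of Phi *)
Definition succ_ord (m : nat) (i : 'I_(2 ^ m).-1) : 'I_(2 ^ m) :=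
  Ordinal (succ_ord_proof i).

(* Psi = (1_K 1_K^T - Phi_K) with first row and first column deleted, K = 2^m.
   Entry (i,j) (0-based) is the paper's entry (i+1, j+1). *)
Definition Psi (R : pzRingType) (m : nat) : 'M[R]_((2 ^ m).-1) :=
  \matrix_(i, j) (1 - sylvester R m (succ_ord i) (succ_ord j)).

Definition Psi_app (R : pzRingType) (m : nat) (a : 'I_(2 ^ m).-1 -> R)
  (j : 'I_(2 ^ m).-1) : R :=
  \sum_k Psi R m j k * a k.

Definition bcoef (R : realType) (m : nat) (a : 'I_(2 ^ m).-1 -> R)
  (i : 'I_(2 ^ m).-1) : R :=
  \sum_j Psi R m i j * expR (- Psi_app a j).

Definition Dcoef (R : realType) (m : nat) (a : 'I_(2 ^ m).-1 -> R) : R :=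
  1 + \sum_j expR (- Psi_app a j).

From HB Require Import structures.
From mathcomp Require Import all_boot all_order all_algebra.
From mathcomp Require Import all_classical all_reals all_analysis.
From mathcomp Require Import ring lra.
Import Order.TTheory GRing.Theory Num.Theory.
Import numFieldNormedType.Exports.
Set Implicit Arguments. Unset Strict Implicit. Unset Printing Implicit Defensive.
Local Open Scope ring_scope.

(* On vectors with one value [g] at the odd and another value [d] at the even
   (paper) indices, the row sums of the Sylvester matrix over each parity class
   make [Psi a] take only two values, so the vector field again has this
   odd/even form. The field is moreover Lipschitz on compact boxes of the
   positive orthant, so a Gronwall estimate on the squared distance of [a t]
   to the odd/even pattern keeps the solution inside it. On that pattern, with
   [p = 2L/(L+1)], [K = 2^m] and [D, e0, e1 > 0],
     g' = D^-1 (2 e0 + (K - 2) e1) g^p   and   d' = D^-1 K e1 d^p,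
   hence (g/d)' > 0 as soon as (g/d)^(p-1) > K/(K-2), i.e. as soon as
   g/d > (K/(K-2))^((L+1)/(L-1)). This holds at time 0, so the ratio can never
   fall back to the threshold and increases strictly for all time. *)

(** * Entries and parity-class row sums of the Sylvester matrix *)

(* Parity of the number of common 1-bits of [u] and [v] below bit [m]. *)
Fixpoint bit_dot (m u v : nat) : bool :=
  match m with
  | 0 => false
  | m'.+1 => bit_dot m' (u %% 2 ^ m') (v %% 2 ^ m') (+) ((2 ^ m' <= u) && (2 ^ m' <= v))%N
  end.

Lemma bit_dotS m u v : bit_dot m.+1 u v =
  bit_dot m (u %% 2 ^ m) (v %% 2 ^ m) (+) ((2 ^ m <= u) && (2 ^ m <= v))%N.
Proof. by []. Qed.

Lemma bit_dotC m u v : bit_dot m u v = bit_dot m v u.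
Proof. by elim: m u v => //= m IH u v; rewrite IH andbC. Qed.

Lemma bit_dot0n m v : bit_dot m 0 v = false.
Proof. by elim: m v => //= m IH v; rewrite mod0n IH leqNgt expn_gt0. Qed.

Lemma bit_dot1n m v : (0 < m)%N -> (v < 2 ^ m)%N -> bit_dot m 1 v = odd v.
Proof.
elim: m v => // m IH v _ hv /=.
case: m IH hv => [|m] IH hv; first by case: v hv => [|[|]].
rewrite modn_small; last by rewrite (ltn_exp2l 0).
rewrite IH //; last by rewrite ltn_mod expn_gt0.
rewrite [(2 ^ m.+1 <= 1)%N]leqNgt (ltn_exp2l 0) //= addbF.
by rewrite odd_mod // expnS mul2n odd_double.
Qed.

Arguments bit_dot : simpl never.

Lemma sylvesterE (R : pzRingType) m (i j : 'I_(2 ^ m)) :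
  sylvester R m i j = (-1) ^+ bit_dot m i j.
Proof.
elim: m i j => [|m IH] i j; first by rewrite /= mxE !ord1 eqxx.
rewrite /= castmxE bit_dotS /=.
set i' := cast_ord _ i; set j' := cast_ord _ j.
rewrite -[i : nat]/(i' : nat) -[j : nat]/(j' : nat); clearbody i' j'.
have lo (k : 'I_(2 ^ m)) : (k %% 2 ^ m = k)%N /\ (2 ^ m <= k)%N = false.
  by rewrite modn_small // leqNgt ltn_ord.
have hi (k : 'I_(2 ^ m)) : ((2 ^ m + k) %% 2 ^ m = k)%N /\ (2 ^ m <= 2 ^ m + k)%N.
  by rewrite modnDl modn_small // leq_addr.
case: (split_ordP i') => k ->; case: (split_ordP j') => l ->.
- by rewrite block_mxEul IH /= (lo k).1 (lo k).2 (lo l).1 andFb addbF.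
- by rewrite block_mxEur IH /= (lo k).1 (lo k).2 (hi l).1 addbF.
- by rewrite block_mxEdl IH /= (lo l).1 (lo l).2 (hi k).1 andbF addbF.
- rewrite block_mxEdr mxE IH /= (hi k).1 (hi k).2 (hi l).1 (hi l).2.
  by rewrite signr_addb expr1 mulrN1.
Qed.

Lemma sum_sylvester_parity (R : pzRingType) m u b : (u < 2 ^ m.+1)%N ->
  \sum_(0 <= v < 2 ^ m.+1 | odd v == b) ((-1) ^+ bit_dot m.+1 u v : R) =
  if u == 0%N then (2 ^ m)%:R
  else if u == 1%N then (if b then - (2 ^ m)%:R else (2 ^ m)%:R) else 0.
Proof.
elim: m u => [|m IH] u hu.
  rewrite big_mkcond /= !big_nat_recr //= big_geq // !bit_dotS.
  by case: u hu => [|[|]] //; case: b => _ /=; rewrite ?expr0 ?expr1 ?add0r ?addr0.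
set N := (2 ^ m.+1)%N.
have hN : (2 ^ m.+2 = N + N)%N by rewrite /N expnS mul2n addnn.
have N2 : (2 <= N)%N by rewrite /N (leq_exp2l 1).
have oN : odd N = false by rewrite /N expnS mul2n odd_double.
rewrite hN (@big_cat_nat _ _ _ N 0 (N + N) _ _ (leq0n N) (leq_addr N N)) /=.
rewrite [X in _ + \sum_(X <= _ < _ | _) _](_ : N = 0 + N)%N // big_addn addnK.
have lowE : \sum_(0 <= v < N | odd v == b) ((-1) ^+ bit_dot m.+2 u v : R) =
    \sum_(0 <= v < N | odd v == b)
      (-1) ^+ (bit_dot m.+1 (u %% N) v (+) (N <= u)%N && (N <= v)%N).
  rewrite big_mkcond [RHS]big_mkcond; apply: eq_big_nat => v /andP[_ hv] /=.
  by rewrite bit_dotS [(v %% _)%N]modn_small.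
have highE : \sum_(0 <= v < N | odd (v + N) == b) ((-1) ^+ bit_dot m.+2 u (v + N) : R) =
    \sum_(0 <= v < N | odd v == b) (-1) ^+ (bit_dot m.+1 (u %% N) v (+) (N <= u)%N).
  rewrite big_mkcond [RHS]big_mkcond; apply: eq_big_nat => v /andP[_ hv] /=.
  rewrite oddD oN addbF bit_dotS.
  have -> : ((v + N) %% 2 ^ m.+1 = v)%N by rewrite modnDr modn_small.
  by rewrite leq_addl andbT.
rewrite lowE highE.
case: (ltnP u N) => huN.
  rewrite modn_small //=.
  rewrite (eq_bigr (fun v => (-1) ^+ bit_dot m.+1 u v)); last by move=> v _; rewrite addbF.
  rewrite IH // -mulr2n /N.
  have -> : (2 ^ m.+1 = (2 ^ m) * 2)%N by rewrite expnS mulnC.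
  by case: (u == 0%N); case: (u == 1%N); case: (b);
    rewrite ?mul0rn ?mulrnA ?mulNrn ?natrM ?mulr_natr.
have u0 : (u == 0%N) = false by apply/negbTE; rewrite -lt0n ltnW // (leq_trans N2 huN).
have u1 : (u == 1%N) = false by apply/negbTE; rewrite neq_ltn (leq_trans N2 huN) orbT.
rewrite u0 u1 -big_split /= big_nat_cond big1 // => v /andP[/andP[_ hv] _].
rewrite [(N <= v)%N]leqNgt hv /=.
by case: (bit_dot _ _ _); rewrite /= ?expr0 ?expr1 ?subrr ?addNr.
Qed.

Lemma PsiE (R : pzRingType) m (i j : 'I_(2 ^ m).-1) :
  Psi R m i j = 1 - (-1) ^+ bit_dot m i.+1 j.+1.
Proof. by rewrite /Psi mxE sylvesterE. Qed.

Lemma Psi_ge0 (R : numDomainType) m (i j : 'I_(2 ^ m).-1) : 0 <= Psi R m i j.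
Proof. by rewrite PsiE; case: bit_dot; rewrite ?expr0 ?expr1 ?subrr ?opprK // ler0n. Qed.

Lemma Psi_le2 (R : numDomainType) m (i j : 'I_(2 ^ m).-1) : Psi R m i j <= 2.
Proof. by rewrite PsiE; case: bit_dot; rewrite ?expr0 ?expr1 ?subrr ?opprK // ler0n. Qed.

Lemma Psi_first_col (R : pzRingType) m (i j : 'I_(2 ^ m.+1).-1) : j = 0 :> nat ->
  Psi R m.+1 i j = if odd i.+1 then 2 else 0.
Proof.
move=> j0; rewrite PsiE j0 bit_dotC bit_dot1n ?succ_ord_proof //.
by case: odd; rewrite ?expr0 ?expr1 ?subrr ?opprK.
Qed.

Lemma sum_ord_pred_shift (R : pzRingType) n (P : pred nat) (f : nat -> R) : (0 < n)%N ->
  \sum_(k < n.-1 | P k.+1) f k.+1 =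
  \sum_(0 <= v < n | P v) f v - (if P 0%N then f 0%N else 0).
Proof.
move=> n0; rewrite -[in RHS](prednK n0).
by rewrite big_mkcond [in RHS]big_mkcond big_nat_recl //= addrC addrK big_mkord.
Qed.

Lemma Psi_parity_row_sum (R : pzRingType) m (j : 'I_(2 ^ m.+1).-1) (b : bool) :
  \sum_(k < (2 ^ m.+1).-1 | odd k.+1 == b) Psi R m.+1 j k =
  if j == 0 :> nat then (if b then (2 ^ m.+1)%:R else 0) else (2 ^ m)%:R.
Proof.
under eq_bigr => k _ do rewrite PsiE.
rewrite (@sum_ord_pred_shift R _ (fun v => odd v == b)
           (fun v => 1 - (-1) ^+ bit_dot m.+1 j.+1 v)) ?expn_gt0 //.
rewrite bit_dotC bit_dot0n expr0 subrr if_same subr0 big_split /= sumrN.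
have -> : \sum_(0 <= v < 2 ^ m.+1 | odd v == b) (1 : R) =
          \sum_(0 <= v < 2 ^ m.+1 | odd v == b) (-1) ^+ bit_dot m.+1 0 v.
  by apply: eq_bigr => v _; rewrite bit_dot0n.
rewrite !sum_sylvester_parity ?expn_gt0 ?succ_ord_proof // eqxx /= eqSS.
case: (j == 0 :> nat); case: b; rewrite ?subrr ?opprK ?subr0 //.
by rewrite -natrD addnn -mul2n -expnS.
Qed.

(* Index [i] is the paper's index [i + 1]: [g] sits at the paper's odd indices. *)
Definition parity_vec (R : Type) m (g d : R) : 'I_(2 ^ m).-1 -> R :=
  fun i => if odd i.+1 then g else d.

Lemma Psi_app_parity_vec (R : pzRingType) m (g d : R) (k : 'I_(2 ^ m.+1).-1) :
  Psi_app (parity_vec g d) k =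
  if k == 0 :> nat then (2 ^ m.+1)%:R * g else (2 ^ m)%:R * (g + d).
Proof.
have E u : Psi R m.+1 k u * parity_vec g d u =
    (if odd u.+1 == true then Psi R m.+1 k u * g else 0) +
    (if odd u.+1 == false then Psi R m.+1 k u * d else 0).
  by rewrite /parity_vec; case: odd; rewrite ?addr0 ?add0r.
rewrite /Psi_app (eq_bigr _ (fun u _ => E u)) big_split -!big_mkcond -!big_distrl.
by rewrite /= !Psi_parity_row_sum; case: ifP; rewrite ?mul0r ?addr0 ?mulrDr.
Qed.

Lemma Psi_row_sum (R : pzRingType) m (k : 'I_(2 ^ m.+1).-1) :
  \sum_u Psi R m.+1 k u = (2 ^ m.+1)%:R.
Proof.
have := @Psi_app_parity_vec R m 1 1 k.
rewrite /Psi_app; under eq_bigr do rewrite /parity_vec if_same mulr1.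
move=> ->; case: ifP; rewrite ?mulr1 // => _.
by rewrite mulrDr mulr1 -natrD addnn -mul2n -expnS.
Qed.

Lemma Psi_mul_split_first (R : comPzRingType) m (i : 'I_(2 ^ m.+1).-1) (e0 e1 : R) :
  \sum_k Psi R m.+1 i k * (if k == 0 :> nat then e0 else e1) =
  parity_vec (2 * e0 + ((2 ^ m.+1)%:R - 2) * e1) ((2 ^ m.+1)%:R * e1) i.
Proof.
have n_gt0 : (0 < (2 ^ m.+1).-1)%N by rewrite -ltnS prednK ?expn_gt0 // (ltn_exp2l 0).
pose j0 : 'I_(2 ^ m.+1).-1 := Ordinal n_gt0.
have others k : k != j0 -> (k == 0 :> nat) = false.
  by apply: contraNF => /eqP k0; apply/eqP/val_inj.
rewrite (bigD1 j0) //= (eq_bigr (fun k => Psi R m.+1 i k * e1)); last first.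
  by move=> k /others ->.
have rest : \sum_(k | k != j0) Psi R m.+1 i k = (2 ^ m.+1)%:R - Psi R m.+1 i j0.
  by rewrite -(Psi_row_sum R i) [in RHS](bigD1 j0) //= addrAC subrr add0r.
rewrite -big_distrl /= rest (Psi_first_col R i (erefl : j0 = 0 :> nat)) /parity_vec.
by case: odd; ring.
Qed.

Section ParityProjection.
Variables (m : nat) (i0 i1 : 'I_(2 ^ m).-1).
Hypotheses (i0_val : i0 = 0 :> nat) (i1_val : i1 = 1 :> nat).

Definition parity_proj (k : 'I_(2 ^ m).-1) := if odd k.+1 then i0 else i1.

Lemma parity_vec_proj (T : Type) (g d : T) k :
  parity_vec g d (parity_proj k) = parity_vec g d k.
Proof. by rewrite /parity_vec /parity_proj; case: (odd k.+1); rewrite ?i0_val ?i1_val. Qed.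

Lemma comp_parity_proj (T : Type) (x : 'I_(2 ^ m).-1 -> T) :
  x \o parity_proj = parity_vec (x i0) (x i1).
Proof. by apply/funext => k; rewrite /parity_proj /parity_vec /=; case: odd. Qed.

Lemma parity_vec_first (T : Type) (g d : T) : parity_vec g d i0 = g.
Proof. by rewrite /parity_vec i0_val. Qed.

Lemma parity_vec_second (T : Type) (g d : T) : parity_vec g d i1 = d.
Proof. by rewrite /parity_vec i1_val. Qed.

End ParityProjection.

Definition vfield (R : realType) m (p : R) (x : 'I_(2 ^ m).-1 -> R) i : R :=
  (Dcoef x)^-1 * bcoef x i * x i `^ p.

Section ParityVectorField.
Variables (R : realType) (m : nat) (p g d : R).
Let K : R := (2 ^ m.+1)%:R.
Let e0 := expR (- (K * g)).
Let e1 := expR (- ((2 ^ m)%:R * (g + d))).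
Let x : 'I_(2 ^ m.+1).-1 -> R := parity_vec g d.

Lemma bcoef_parity_vec i : bcoef x i = parity_vec (2 * e0 + (K - 2) * e1) (K * e1) i.
Proof.
rewrite /bcoef -Psi_mul_split_first; apply: eq_bigr => k _.
by rewrite Psi_app_parity_vec; case: ifP.
Qed.

Lemma vfield_parity_vec i :
  vfield p x i = parity_vec ((Dcoef x)^-1 * (2 * e0 + (K - 2) * e1) * g `^ p)
                            ((Dcoef x)^-1 * (K * e1) * d `^ p) i.
Proof. by rewrite /vfield bcoef_parity_vec /x /parity_vec; case: odd. Qed.

End ParityVectorField.

Section VectorFieldBounds.
Variables (R : realType) (m : nat).
Implicit Types (x : 'I_(2 ^ m).-1 -> R).

Lemma Dcoef_ge1 x : 1 <= Dcoef x.
Proof. by rewrite /Dcoef lerDl sumr_ge0 // => j _; exact/ltW/expR_gt0. Qed.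

Lemma Dcoef_gt0 x : 0 < Dcoef x.
Proof. exact: lt_le_trans ltr01 (Dcoef_ge1 x). Qed.

Lemma bcoef_ge0 x i : 0 <= bcoef x i.
Proof.
by rewrite sumr_ge0 // => j _; rewrite mulr_ge0 ?Psi_ge0 //; exact/ltW/expR_gt0.
Qed.

Lemma vfield_ge0 p x i : 0 <= vfield p x i.
Proof. by rewrite !mulr_ge0 ?bcoef_ge0 ?powR_ge0 // invr_ge0; exact/ltW/Dcoef_gt0. Qed.

Lemma Psi_app_ge0 x j : (forall k, 0 <= x k) -> 0 <= Psi_app x j.
Proof. by move=> x0; rewrite sumr_ge0 // => k _; rewrite mulr_ge0 ?Psi_ge0. Qed.

Lemma bcoef_le x i : (forall k, 0 <= x k) -> bcoef x i <= 2 * ((2 ^ m).-1)%:R.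
Proof.
move=> x0; apply: le_trans (_ : \sum_(j < (2 ^ m).-1) (2 : R) <= _); last first.
  by rewrite sumr_const card_ord mulr_natr.
apply: ler_sum => j _; rewrite -[2 in X in _ <= X]mulr1.
apply: ler_pM; [exact: Psi_ge0 | exact/ltW/expR_gt0 | exact: Psi_le2 |].
by rewrite -expR0 ler_expR lerNl oppr0 Psi_app_ge0.
Qed.

End VectorFieldBounds.

(** * Lipschitz bounds on boxes of the positive orthant *)

Lemma expRN_lipschitz (R : realType) (z w : R) : 0 <= z -> 0 <= w ->
  `|expR (- z) - expR (- w)| <= `|z - w|.
Proof.
wlog zw : z w / z <= w.
  move=> H z0 w0; case: (leP z w) => h; first exact: H.
  by rewrite distrC [`|z - w|]distrC; apply: H => //; exact: ltW.
move=> z0 w0.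
have e : expR (- w) = expR (- z) * expR (- (w - z)) by rewrite -expRD; congr expR; ring.
have h1 : 1 - (w - z) <= expR (- (w - z)) by have := expR_ge1Dx (- (w - z)).
have h2 : expR (- (w - z)) <= 1 by rewrite -expR0 ler_expR lerNl oppr0 subr_ge0.
have h3 : expR (- z) <= 1 by rewrite -expR0 ler_expR lerNl oppr0.
have h4 := expR_gt0 (- z).
rewrite e -{1}(mulr1 (expR (- z))) -mulrBr normrM gtr0_norm // [`|z - w|]distrC.
rewrite ger0_norm ?subr_ge0 // ger0_norm ?subr_ge0 //.
rewrite -[X in _ <= X]mul1r; apply: ler_pM; lra.
Qed.

Lemma powR_lipschitz (R : realType) (p c M y z : R) : 1 <= p -> 0 < c ->
  c <= y <= M -> c <= z <= M ->
  `|y `^ p - z `^ p| <= p * M `^ (p - 1) * `|y - z|.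
Proof.
move=> hp hc.
wlog yz : y z / y <= z.
  move=> H hy hz; case: (leP y z) => h; first exact: H.
  by rewrite distrC [`|y - z|]distrC; apply: H => //; exact: ltW.
move=> /andP[hy _] /andP[_ hzM].
have [->|yz'] := eqVneq y z; first by rewrite !subrr normr0 mulr0.
have {}yz : y < z by rewrite lt_neqAle yz' yz.
have y0 : 0 < y by apply: lt_le_trans hc hy.
have dP (w : R) : 0 < w -> is_derive w 1 (fun v : R => v `^ p) (p * w `^ (p - 1)).
  exact: is_derive1_powR.
have [w wi E] : exists2 w : R,
    w \in `]y, z[ & z `^ p - y `^ p = p * w `^ (p - 1) * (z - y).
  apply: (@MVT R (fun v => v `^ p) (fun w => p * w `^ (p - 1)) y z yz).
    by move=> w; rewrite in_itv /= => /andP[yw _]; apply: dP; exact: lt_trans yw.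
  apply: derivable_within_continuous => w; rewrite in_itv /= => /andP[yw _].
  by apply: ex_derive; apply: dP; apply: lt_le_trans yw.
move: wi; rewrite in_itv /= => /andP[yw wz].
have zy0 : 0 <= z - y by rewrite subr_ge0; exact: ltW.
rewrite distrC E [`|y - z|]distrC (ger0_norm zy0).
rewrite ger0_norm; last by rewrite !mulr_ge0 ?powR_ge0 //; lra.
apply: ler_wpM2r => //.
apply: ler_wpM2l; first lra.
apply: ge0_ler_powR; rewrite ?nnegrE; lra.
Qed.

Lemma ler_dist_inv_ge1 (R : realFieldType) (a b : R) : 1 <= a -> 1 <= b ->
  `|a^-1 - b^-1| <= `|a - b|.
Proof.
move=> a1 b1; have a0 : 0 < a by lra. have b0 : 0 < b by lra.
rewrite -[X in _ <= X]mul1r.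
have -> : a^-1 - b^-1 = (a * b)^-1 * (b - a) by field; rewrite ?gt_eqF.
have ab0 : 0 < a * b by rewrite mulr_gt0.
rewrite normrM distrC ger0_norm ?invr_ge0 ?(ltW ab0) //.
by rewrite ler_wpM2r // invf_le1 //; nra.
Qed.

Lemma ler_dist_mul3 (R : realDomainType) (u1 u2 v1 v2 w1 w2 U V W : R) :
  0 <= u2 <= U -> 0 <= v1 <= V -> 0 <= v2 <= V -> 0 <= w1 <= W ->
  `|u1 * v1 * w1 - u2 * v2 * w2| <=
    `|u1 - u2| * V * W + U * `|v1 - v2| * W + U * V * `|w1 - w2|.
Proof.
move=> /andP[u20 u2U] /andP[v10 v1V] /andP[v20 v2V] /andP[w10 w1W].
have -> : u1 * v1 * w1 - u2 * v2 * w2 =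
    (u1 - u2) * v1 * w1 + u2 * (v1 - v2) * w1 + u2 * v2 * (w1 - w2) by ring.
have M3 a b c A B C : 0 <= a -> 0 <= b -> 0 <= c -> a <= A -> b <= B -> c <= C ->
    a * b * c <= A * B * C.
  by move=> *; rewrite ler_pM ?mulr_ge0 // ler_pM.
apply: le_trans (ler_normD _ _) _; apply: lerD; first apply: le_trans (ler_normD _ _) _.
- apply: lerD; rewrite !normrM.
    by rewrite (ger0_norm v10) (ger0_norm w10) M3.
  by rewrite (ger0_norm u20) (ger0_norm w10) M3.
- by rewrite !normrM (ger0_norm u20) (ger0_norm v20) M3.
Qed.

Section VectorFieldLipschitz.
Variables (R : realType) (m : nat).
Let n : R := ((2 ^ m).-1)%:R.
Implicit Types (x y : 'I_(2 ^ m).-1 -> R).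
Let dist x y := \sum_k `|x k - y k|.

Lemma Psi_app_lipschitz x y j : `|Psi_app x j - Psi_app y j| <= 2 * dist x y.
Proof.
rewrite /Psi_app -sumrB /dist big_distrr /=; apply: le_trans (ler_norm_sum _ _ _) _.
apply: ler_sum => k _; rewrite -mulrBr normrM ler_wpM2r //.
by rewrite ger0_norm ?Psi_ge0 ?Psi_le2.
Qed.

Lemma bcoef_lipschitz x y i : (forall k, 0 <= x k) -> (forall k, 0 <= y k) ->
  `|bcoef x i - bcoef y i| <= 4 * n * dist x y.
Proof.
move=> x0 y0; rewrite /bcoef -sumrB; apply: le_trans (ler_norm_sum _ _ _) _.
have -> : 4 * n * dist x y = \sum_(j < (2 ^ m).-1) 2 * (2 * dist x y).
  by rewrite sumr_const card_ord /n -mulr_natr; ring.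
apply: ler_sum => j _; rewrite -mulrBr normrM ger0_norm ?Psi_ge0 //.
apply: ler_pM; rewrite ?Psi_ge0 ?Psi_le2 //.
apply: le_trans (expRN_lipschitz _ _) (Psi_app_lipschitz x y j); exact: Psi_app_ge0.
Qed.

Lemma Dcoef_lipschitz x y : (forall k, 0 <= x k) -> (forall k, 0 <= y k) ->
  `|Dcoef x - Dcoef y| <= 2 * n * dist x y.
Proof.
move=> x0 y0; rewrite /Dcoef opprD addrACA subrr add0r -sumrB.
apply: le_trans (ler_norm_sum _ _ _) _.
have -> : 2 * n * dist x y = \sum_(j < (2 ^ m).-1) 2 * dist x y.
  by rewrite sumr_const card_ord /n -mulr_natr; ring.
apply: ler_sum => j _; apply: le_trans (Psi_app_lipschitz x y j).
by apply: expRN_lipschitz; exact: Psi_app_ge0.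
Qed.

Lemma vfield_lipschitz p c M : 1 <= p -> 0 < c ->
  exists2 C, 0 <= C &
    forall x y, (forall k, c <= x k <= M) -> (forall k, c <= y k <= M) ->
    forall i, `|vfield p x i - vfield p y i| <= C * dist x y.
Proof.
move=> p1 c0; have n0 : 0 <= n by exact: ler0n.
exists (2 * n * (2 * n) * M `^ p + 4 * n * M `^ p + 2 * n * (p * M `^ (p - 1))).
  by rewrite !addr_ge0 ?mulr_ge0 ?powR_ge0 //; lra.
move=> x y hx hy i.
have x0 k : 0 <= x k by case/andP: (hx k) => + _; apply: le_trans (ltW c0).
have y0 k : 0 <= y k by case/andP: (hy k) => + _; apply: le_trans (ltW c0).
have hD (z : 'I_(2 ^ m).-1 -> R) : 0 <= (Dcoef z)^-1 <= 1.
  by rewrite invr_ge0 (ltW (Dcoef_gt0 z)) /= invf_le1 ?Dcoef_gt0 ?Dcoef_ge1.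
have hb (z : 'I_(2 ^ m).-1 -> R) : (forall k, 0 <= z k) -> 0 <= bcoef z i <= 2 * n.
  by move=> z0; rewrite bcoef_ge0 bcoef_le.
have hP (z : 'I_(2 ^ m).-1 -> R) : (forall k, c <= z k <= M) -> 0 <= z i `^ p <= M `^ p.
  move=> hz; rewrite powR_ge0 /=; case/andP: (hz i) => ci iM.
  by apply: ge0_ler_powR; rewrite ?nnegrE //; lra.
rewrite /vfield; apply: le_trans (ler_dist_mul3 _ _ (hD y) (hb x x0) (hb y y0) (hP x hx)) _.
have S0 : 0 <= dist x y by rewrite sumr_ge0.
have MP0 : 0 <= M `^ p := powR_ge0 _ _.
have MP1 : 0 <= p * M `^ (p - 1) by rewrite mulr_ge0 ?powR_ge0 //; lra.
have h1 : `|(Dcoef x)^-1 - (Dcoef y)^-1| <= 2 * n * dist x y.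
  exact: le_trans (ler_dist_inv_ge1 (Dcoef_ge1 x) (Dcoef_ge1 y)) (Dcoef_lipschitz x0 y0).
have h2 := bcoef_lipschitz i x0 y0.
have h3 : `|x i `^ p - y i `^ p| <= p * M `^ (p - 1) * dist x y.
  apply: le_trans (powR_lipschitz p1 c0 (hx i) (hy i)) _.
  by rewrite ler_wpM2l // /dist (bigD1 i) //= lerDl sumr_ge0.
have nMP0 : 0 <= n * M `^ p by rewrite mulr_ge0.
nra.
Qed.

End VectorFieldLipschitz.

(** * Invariance of the odd/even pattern *)

Lemma within_continuous_sum (R : realType) (A : set R) n (f : 'I_n -> R -> R) :
  (forall k, {within A, continuous (f k)}%classic) ->
  {within A, continuous (\sum_k f k)}%classic.
Proof.
move=> cf; apply: (big_ind (fun h : R -> R => {within A, continuous h}%classic)) => //.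
- by move=> x; apply: cvg_cst.
- by move=> g h cg ch x; apply: cvgD; [exact: cg | exact: ch].
Qed.

Lemma sqr_sum_norm_le (R : realFieldType) n (d : 'I_n -> R) :
  (\sum_k `|d k|) ^+ 2 <= n%:R * \sum_k d k ^+ 2.
Proof.
rewrite -(ler_pM2l (ltr0n R 2)) expr2 big_distrl /= big_distrr /=.
under eq_bigr do rewrite big_distrr /= big_distrr /=.
apply: (@le_trans _ _ (\sum_i \sum_k (d i ^+ 2 + d k ^+ 2))).
  apply: ler_sum => i _; apply: ler_sum => k _.
  have := sqr_ge0 (`|d i| - `|d k|).
  by rewrite -[d i ^+ 2]real_normK ?num_real // -[d k ^+ 2]real_normK ?num_real //; nra.
rewrite (eq_bigr (fun i => n%:R * d i ^+ 2 + \sum_k d k ^+ 2)); last first.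
  by move=> i _; rewrite big_split /= sumr_const card_ord mulr_natl.
by rewrite big_split /= -big_distrr /= sumr_const card_ord -mulr_natl; lra.
Qed.

Lemma gronwall_zero (R : realType) (V dV : R -> R) (C t : R) : 0 < t ->
  {within `[0, t], continuous V}%classic ->
  (forall x, 0 < x -> x < t -> is_derive x 1 V (dV x)) ->
  (forall x, 0 < x -> x < t -> dV x <= C * V x) ->
  V 0 = 0 -> V t <= 0.
Proof.
move=> t0 cV dV_V dV_le V0.
pose E x := expR (- (C * x)).
have dE (x : R) : is_derive x 1 E (E x * - C).
  have dlin : is_derive x 1 (fun y : R => - (C * y)) (- C).
    have := @is_deriveZ R R R id C x 1 1 (is_derive_id x 1).
    by move/is_deriveN; rewrite /GRing.scale /= mulr1.
  exact: is_derive1_comp.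
have dW (x : R) : 0 < x -> x < t -> is_derive x 1 (V * E) (E x * (dV x - C * V x)).
  move=> x0 xt; apply: is_derive_eq; first exact: is_deriveM (dV_V x x0 xt) (dE x).
  by rewrite /GRing.scale /=; ring.
have cW : {within `[0, t], continuous (V * E)}%classic.
  have cE : {within `[0, t], continuous E}%classic.
    by apply: derivable_within_continuous => x _; apply: ex_derive; exact: dE.
  by move=> x; apply: cvgM; [exact: cV | exact: cE].
have W_le : (V * E) t <= (V * E) 0.
  apply: (ler0_derive1_le_cc (a := 0) (b := t)) => //; rewrite ?in_itv /= ?lexx ?ltW //.
  - by move=> x; rewrite in_itv /= => /andP[x0 xt]; apply: ex_derive; exact: dW.
  - move=> x; rewrite in_itv /= => /andP[x0 xt]; have dWx := dW x x0 xt.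
    rewrite derive1E derive_val.
    by rewrite pmulr_rle0 ?expR_gt0 // subr_le0 dV_le.
have : V t * E t <= V 0 * E 0 := W_le.
by rewrite V0 mul0r pmulr_lle0 // expR_gt0.
Qed.

Lemma bounded_on_itv (R : realType) n (f : 'I_n -> R -> R) (s t : R) : s <= t ->
  (forall k, {within `[s, t], continuous (f k)}%classic) ->
  exists M, forall k x, s <= x <= t -> f k x <= M.
Proof.
move=> st cf.
have maxk k : exists ck, forall x, s <= x <= t -> f k x <= f k ck.
  have [ck _ hck] := EVT_max st (cf k).
  by exists ck => x hx; apply: hck; rewrite in_itv.
have [g hg] := choice maxk.
exists (\sum_k `|f k (g k)|) => k x hx; apply: le_trans (hg k x hx) _.
by apply: le_trans (ler_norm _) _; rewrite (bigD1 k) //= lerDl sumr_ge0.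
Qed.

Section InvariantSymmetry.
Variables (R : realType) (n : nat) (F : ('I_n -> R) -> 'I_n -> R) (sigma : 'I_n -> 'I_n).
Hypothesis F_sym : forall x k, F (x \o sigma) (sigma k) = F (x \o sigma) k.

Section Box.
Variables (c M C : R).
Hypothesis C_ge0 : 0 <= C.
Hypothesis F_lip : forall x y, (forall k, c <= x k <= M) -> (forall k, c <= y k <= M) ->
  forall k, `|F x k - F y k| <= C * \sum_l `|x l - y l|.

Lemma F_defect_le x : (forall k, c <= x k <= M) ->
  forall k, `|F x k - F x (sigma k)| <= 2 * C * \sum_l `|x l - x (sigma l)|.
Proof.
move=> hx k; pose y := x \o sigma.
have hy l : c <= y l <= M by exact: hx.
have -> : F x k - F x (sigma k) = (F x k - F y k) - (F x (sigma k) - F y (sigma k)).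
  by rewrite /y F_sym; ring.
have dist_y : \sum_l `|x l - y l| = \sum_l `|x l - x (sigma l)| by [].
apply: le_trans (ler_normB _ _) _.
apply: le_trans (lerD (F_lip hx hy k) (F_lip hx hy (sigma k))) _.
by rewrite dist_y; lra.
Qed.

Lemma defect_energy_le x : (forall k, c <= x k <= M) ->
  \sum_k 2 * (x k - x (sigma k)) * (F x k - F x (sigma k)) <=
  4 * C * n%:R * \sum_k (x k - x (sigma k)) ^+ 2.
Proof.
move=> hx; set S := \sum_l `|x l - x (sigma l)|.
have S0 : 0 <= S by rewrite sumr_ge0.
apply: le_trans (_ : \sum_k 4 * C * S * `|x k - x (sigma k)| <= _).
  apply: ler_sum => k _.
  have h1 : (x k - x (sigma k)) * (F x k - F x (sigma k)) <=
      `|x k - x (sigma k)| * `|F x k - F x (sigma k)| by rewrite -normrM ler_norm.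
  have h2 : `|x k - x (sigma k)| * `|F x k - F x (sigma k)| <=
      `|x k - x (sigma k)| * (2 * C * S) by rewrite ler_wpM2l ?F_defect_le.
  lra.
rewrite -big_distrr /= -/S -mulrA -expr2 -[X in _ <= X]mulrA ler_wpM2l ?mulr_ge0 //.
exact: sqr_sum_norm_le.
Qed.

End Box.

Variables (a : R -> 'I_n -> R) (c : R).
Hypothesis F_lipschitz : forall M, exists2 C, 0 <= C &
  forall x y, (forall k, c <= x k <= M) -> (forall k, c <= y k <= M) ->
  forall k, `|F x k - F y k| <= C * \sum_l `|x l - y l|.
Hypothesis a_ge : forall (t : R) k, 0 <= t -> c <= a t k.
Hypothesis a_cont :
  forall k, {within [set x : R | 0 <= x], continuous (fun s => a s k)}%classic.
Hypothesis a_ode :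
  forall (t : R) k, 0 < t -> is_derive t 1 (fun s => a s k) (F (a t) k).

Lemma solution_symmetric : (forall k, a 0 (sigma k) = a 0 k) ->
  forall t k, 0 <= t -> a t (sigma k) = a t k.
Proof.
move=> a0_sym t k0 t0.
have [->|tn0] := eqVneq t 0; first exact: a0_sym.
have {tn0 t0} tp : 0 < t by rewrite lt_neqAle eq_sym tn0.
have sub : (`[0, t] `<=` [set x : R | 0 <= x])%classic.
  by move=> x; rewrite /= in_itv /= => /andP[].
have cont (k : 'I_n) : {within `[0, t], continuous (fun s => a s k)}%classic :=
  continuous_subspaceW sub (@a_cont k).
have [M hM] := bounded_on_itv (ltW tp) cont.
have [C C0 hC] := F_lipschitz M.
pose d k s := a s k - a s (sigma k).
pose V := \sum_k (d k * d k).
have VE s : V s = \sum_k d k s ^+ 2.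
  by rewrite /V fct_sumE; apply: eq_bigr => k _; rewrite expr2.
have : V t <= 0.
  apply: (@gronwall_zero _ V (fun s => \sum_k 2 * d k s * (F (a s) k - F (a s) (sigma k)))
            (4 * C * n%:R)) => //.
  - by apply: within_continuous_sum => k x; apply: cvgM; apply: cvgB; apply: cont.
  - move=> s s0 _; apply: is_derive_sum => k; apply: is_derive_eq.
      by apply: is_deriveM; apply: is_deriveB; apply: a_ode.
    by rewrite /GRing.scale /=; ring.
  - move=> s s0 st; rewrite VE; apply: (defect_energy_le C0 hC) => k.
    by rewrite a_ge ?(ltW s0) //= hM // (ltW s0) (ltW st).
  - by rewrite VE; apply: big1 => k _; rewrite /d a0_sym subrr expr0n.
rewrite VE => V_le0.
have sq_ge0 k : 0 <= d k t ^+ 2 := sqr_ge0 _.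
have sum0 : \sum_k d k t ^+ 2 = 0 by apply/le_anti; rewrite V_le0 sumr_ge0.
have /eqP := psumr_eq0P (fun k _ => sq_ge0 k) sum0 (i := k0) isT.
by rewrite sqrf_eq0 subr_eq0 => /eqP.
Qed.

End InvariantSymmetry.

(** * Growth of the ratio *)

Section ScalarDifferentialInequalities.
Variables (R : realType) (q dq : R -> R).
Hypothesis q_cont : {within [set x : R | 0 <= x], continuous q}%classic.
Hypothesis q_deriv : forall s : R, 0 < s -> is_derive s 1 q (dq s).

Let q_cont_itv (s t : R) : 0 <= s -> {within `[s, t], continuous q}%classic.
Proof.
move=> s0; apply: continuous_subspaceW q_cont => x.
by rewrite /= in_itv /= => /andP[+ _]; exact: le_trans.
Qed.

Let q_derivable (s t x : R) : 0 <= s -> x \in `]s, t[ -> derivable q x 1.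
Proof.
move=> s0; rewrite in_itv /= => /andP[sx _].
by apply: ex_derive; apply/q_deriv/(le_lt_trans s0).
Qed.

Let q_derive1 (x : R) : 0 < x -> derive1 q x = dq x.
Proof. by move=> x0; have := q_deriv x0; rewrite derive1E => ?; rewrite derive_val. Qed.

Lemma deriv_ge0_le (s t : R) : 0 <= s -> s <= t ->
  (forall x, s < x -> x < t -> 0 <= dq x) -> q s <= q t.
Proof.
move=> s0 st dq_ge0.
apply: (ger0_derive1_le_cc (a := s) (b := t)); rewrite ?in_itv /= ?lexx ?st //.
- by move=> x; exact: q_derivable.
- move=> x; rewrite in_itv /= => /andP[sx xt].
  by rewrite q_derive1 ?dq_ge0 ?(le_lt_trans s0).
- exact: q_cont_itv.
Qed.

Lemma deriv_gt0_lt (s t : R) : 0 <= s -> s < t ->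
  (forall x, s < x -> x < t -> 0 < dq x) -> q s < q t.
Proof.
move=> s0 st dq_gt0.
apply: (gtr0_derive1_lt_cc (a := s) (b := t)); rewrite ?in_itv /= ?lexx ?(ltW st) //.
- by move=> x; exact: q_derivable.
- move=> x; rewrite in_itv /= => /andP[sx xt].
  by rewrite q_derive1 ?dq_gt0 ?(le_lt_trans s0).
- exact: q_cont_itv.
Qed.

Lemma within_continuous_gt_near (th s : R) : 0 <= s -> th < q s ->
  exists2 e, 0 < e & forall y, 0 <= y -> `|s - y| < e -> th < q y.
Proof.
move: q_cont => /subspace_continuousP qc s0 hs.
have /cvgrPdist_lt /(_ (q s - th)) := qc s s0.
rewrite subr_gt0 => /(_ hs); rewrite near_withinE => /nbhs_ballP[e /= e0 He].
exists e => // y y0 sy; have /= := He y sy y0.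
by have := ler_norm (q s - q y); lra.
Qed.

Lemma deriv_gt0_above (th : R) : th < q 0 ->
  (forall s : R, 0 < s -> th < q s -> 0 < dq s) -> forall t : R, 0 <= t -> th < q t.
Proof.
move=> q0 dq_gt0 t t0; case: (ltP th (q t)) => // qt_le; exfalso.
pose A := [set s : R | 0 <= s /\ q s <= th]%classic.
have A_inf : has_inf A by split; [exists t | exists 0 => ? []].
(* [s0] is the first time [q] reaches [th]: [q] increases on [[0, s0]], so
   [q s0 > th], and by continuity [q > th] slightly beyond [s0] as well. *)
pose s0 := inf A.
have s0_ge0 : 0 <= s0 by apply: lb_le_inf; [exists t | move=> ? []].
have below x : 0 <= x -> x < s0 -> th < q x.
  move=> x0 xs; case: (ltP th (q x)) => // qx; move: xs.
  by rewrite ltNge ge_inf //; exists 0 => ? [].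
have q_s0 : th < q s0.
  have [<- //|s0_neq0] := eqVneq 0 s0.
  apply: lt_le_trans q0 (ltW (deriv_gt0_lt (lexx 0) _ _)) => //.
    by rewrite lt_neqAle s0_neq0.
  by move=> x x0 xs; apply: dq_gt0 => //; apply: below => //; exact: ltW.
have [e e0 He] := within_continuous_gt_near s0_ge0 q_s0.
have [y [y0 qy] ye] := inf_adherent e0 A_inf.
have s0y : s0 <= y by apply: ge_inf => //; exists 0 => ? [].
have := He y y0; rewrite distrC ger0_norm ?subr_ge0 // => /(_ _).
by move=> /(_ ltac:(lra)); lra.
Qed.

End ScalarDifferentialInequalities.

Lemma ratio_growth_gt (R : realType) (K p r g d e0 e1 : R) :
  2 < K -> 1 < p -> (p - 1) * r = 1 -> 0 < d -> 0 < e0 -> 0 < e1 ->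
  (K / (K - 2)) `^ r < g / d ->
  g * (K * e1 * d `^ p) < (2 * e0 + (K - 2) * e1) * g `^ p * d.
Proof.
move=> K2 p1 pr d0 e00 e10 hr.
have K0 : 0 < K / (K - 2) by rewrite divr_gt0 //; lra.
set rho := g / d.
have rho0 : 0 < rho by apply: lt_trans hr; rewrite powR_gt0.
have hg : g = rho * d by rewrite /rho divfK ?gt_eqF.
have hX : K / (K - 2) < rho `^ (p - 1).
  have -> : K / (K - 2) = ((K / (K - 2)) `^ r) `^ (p - 1).
    by rewrite -powRrM [r * _]mulrC pr powRr1 // ltW.
  apply: gt0_ltr_powR; rewrite ?nnegrE ?powR_ge0 //; [lra | exact: ltW].
have hX2 : K < (K - 2) * rho `^ (p - 1) by rewrite -ltr_pdivrMl ?subr_gt0 // mulrC.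
have gp : g `^ p * d = g * d `^ p * rho `^ (p - 1).
  have rp : rho `^ p = rho * rho `^ (p - 1) by rewrite mulr_powRB1 ?(ltW rho0) //; lra.
  by rewrite hg (powRM _ (ltW rho0) (ltW d0)) rp; ring.
have X0 : 0 < rho `^ (p - 1) by rewrite powR_gt0.
have key : K * e1 < (2 * e0 + (K - 2) * e1) * rho `^ (p - 1) by nra.
have gdp : 0 < g * d `^ p by rewrite mulr_gt0 ?powR_gt0 // hg mulr_gt0.
rewrite -[X in _ < X]mulrA gp; nra.
Qed.

Lemma is_derive_div (R : realType) (f g : R -> R) (x df dg : R) : g x != 0 ->
  is_derive x 1 f df -> is_derive x 1 g dg ->
  is_derive x 1 (fun y => f y / g y) ((df * g x - f x * dg) / g x ^+ 2).
Proof.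
move=> gx0 hf hg; apply: is_derive_eq (is_deriveM hf (is_deriveV gx0 hg)) _.
by rewrite /GRing.scale /=; field.
Qed.

Section ParitySolution.
Variables (R : realType) (m : nat) (p g0 d0 : R) (a : R -> 'I_(2 ^ m.+1).-1 -> R).
Variables (i0 i1 : 'I_(2 ^ m.+1).-1).
Hypotheses (m_gt0 : (0 < m)%N) (i0_val : i0 = 0 :> nat) (i1_val : i1 = 1 :> nat).
Hypotheses (p_gt1 : 1 < p) (g0_gt0 : 0 < g0) (d0_gt0 : 0 < d0).
Hypothesis a0 : a 0 = parity_vec g0 d0.
Hypothesis a_cont :
  forall k, {within [set x : R | 0 <= x], continuous (fun s => a s k)}%classic.
Hypothesis a_ode :
  forall (t : R) k, 0 < t -> is_derive t 1 (fun s => a s k) (vfield p (a t) k).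

Lemma solution_ge_min (t : R) k : 0 <= t -> Num.min g0 d0 <= a t k.
Proof.
move=> t0; have min_le : Num.min g0 d0 <= a 0 k.
  by rewrite a0 /parity_vec; case: odd; rewrite ge_min lexx ?orbT.
apply: le_trans min_le _.
apply: (deriv_ge0_le (@a_cont k) (fun (s : R) (s0 : 0 < s) => a_ode k s0)) => // s s0 _.
exact: vfield_ge0.
Qed.

Lemma solution_gt0 (t : R) k : 0 <= t -> 0 < a t k.
Proof. by move=> t0; apply: lt_le_trans (solution_ge_min k t0); rewrite lt_min g0_gt0. Qed.

Lemma solution_parity (t : R) : 0 <= t -> a t = parity_vec (a t i0) (a t i1).
Proof.
have c_gt0 : 0 < Num.min g0 d0 by rewrite lt_min g0_gt0.
have F_sym x k : vfield p (x \o parity_proj i0 i1) (parity_proj i0 i1 k) =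
                 vfield p (x \o parity_proj i0 i1) k.
  by rewrite (comp_parity_proj i0 i1) !vfield_parity_vec parity_vec_proj.
have F_lip (M : R) := vfield_lipschitz m.+1 M (ltW p_gt1) c_gt0.
have a0_sym k : a 0 (parity_proj i0 i1 k) = a 0 k by rewrite a0 parity_vec_proj.
have sym := solution_symmetric F_sym F_lip solution_ge_min a_cont a_ode a0_sym.
move=> t0; apply/funext => k.
by rewrite -(comp_parity_proj i0 i1) /= sym.
Qed.

Let ratio (s : R) := a s i0 / a s i1.

Lemma ratio_continuous : {within [set x : R | 0 <= x], continuous ratio}%classic.
Proof.
have /subspace_continuousP c0 := @a_cont i0.
have /subspace_continuousP c1 := @a_cont i1.
apply/subspace_continuousP => x x0; apply: cvgM; first exact: c0.
by apply: cvgV; [rewrite gt_eqF ?solution_gt0 | exact: c1].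
Qed.

Let dratio (t : R) :=
  (vfield p (a t) i0 * a t i1 - a t i0 * vfield p (a t) i1) / a t i1 ^+ 2.

Lemma ratio_is_derive (t : R) : 0 < t -> is_derive t 1 ratio (dratio t).
Proof.
move=> t0; apply: is_derive_div; last 2 first; [exact: a_ode | exact: a_ode |].
by rewrite gt_eqF // solution_gt0 // ltW.
Qed.

Lemma ratio_deriv_gt0 (r t : R) : (p - 1) * r = 1 -> 0 < t ->
  ((2 ^ m.+1)%:R / ((2 ^ m.+1)%:R - 2)) `^ r < ratio t -> 0 < dratio t.
Proof.
move=> pr t0 hr; have t0' := ltW t0.
have K2 : 2 < (2 ^ m.+1)%:R :> R by rewrite (ltr_nat R 2) -[2%N]/(2 ^ 1)%N ltn_exp2l.
have vf k : vfield p (a t) k = vfield p (parity_vec (a t i0) (a t i1)) k.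
  by rewrite -solution_parity.
rewrite /dratio !vf !vfield_parity_vec parity_vec_first // parity_vec_second //.
set D := (Dcoef _)^-1; have D0 : 0 < D by rewrite invr_gt0 Dcoef_gt0.
set e0 := expR (- (_ * a t i0)); set e1 := expR (- (_ * (a t i0 + a t i1))).
have := ratio_growth_gt K2 p_gt1 pr (solution_gt0 i1 t0')
  (expR_gt0 _ : 0 < e0) (expR_gt0 _ : 0 < e1) hr.
rewrite /ratio => h; apply: divr_gt0; last by rewrite exprn_gt0 ?solution_gt0.
by rewrite subr_gt0; nra.
Qed.

End ParitySolution.

Theorem mainTheorem13 (R : realType) (m L : nat) (hm : (2 <= m)%N) (hL : (2 <= L)%N)
  (a : R -> 'I_(2 ^ m).-1 -> R) (gamma0 delta0 : R)
  (hg0 : 0 < gamma0) (hd0 : 0 < delta0)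
  (hratio0 : ((2 ^ m)%:R / ((2 ^ m)%:R - 2)) `^ ((L%:R + 1) / (L%:R - 1))
             < gamma0 / delta0)
  (hinit : forall i : 'I_(2 ^ m).-1,
      a 0 i = if odd i.+1 then gamma0 else delta0)
  (hcont : forall i : 'I_(2 ^ m).-1,
      ({within [set x : R | 0 <= x], continuous (fun s => a s i)})%classic)
  (hode : forall (t : R) (i : 'I_(2 ^ m).-1), 0 < t ->
      is_derive t 1 (fun s => a s i)
        ((Dcoef (a t))^-1 * bcoef (a t) i
           * (a t i) `^ (2 * L%:R / (L%:R + 1)))) :
  exists gamma delta : R -> R,
    [/\ forall t, 0 <= t -> 0 < gamma t /\ 0 < delta t,
        forall t (i : 'I_(2 ^ m).-1), 0 <= t ->
          a t i = if odd i.+1 then gamma t else delta t,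
        forall s t, 0 <= s -> s < t -> gamma s / delta s < gamma t / delta t
      & forall t, 0 <= t ->
          ((2 ^ m)%:R / ((2 ^ m)%:R - 2)) `^ ((L%:R + 1) / (L%:R - 1))
            < gamma t / delta t].
Proof.
case: m hm a hratio0 hinit hcont hode => [//|m] hm a hratio0 hinit hcont hode.
have n_gt1 : (1 < (2 ^ m.+1).-1)%N.
  by rewrite -ltnS prednK ?expn_gt0 // -[2%N]/(2 ^ 1)%N ltn_exp2l.
pose i0 : 'I_(2 ^ m.+1).-1 := Ordinal (ltnW n_gt1).
pose i1 : 'I_(2 ^ m.+1).-1 := Ordinal n_gt1.
have L2 : 2 <= L%:R :> R by rewrite (ler_nat R 2).
have p_gt1 : 1 < 2 * L%:R / (L%:R + 1) :> R by rewrite ltr_pdivlMr; lra.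
have pr : (2 * L%:R / (L%:R + 1) - 1) * ((L%:R + 1) / (L%:R - 1)) = 1 :> R.
  by field; apply/andP; split; rewrite gt_eqF //; lra.
have a0 : a 0 = parity_vec gamma0 delta0 by apply/funext => i; rewrite hinit.
have i0_val : i0 = 0 :> nat by [].
have i1_val : i1 = 1 :> nat by [].
have a_par := solution_parity i0_val i1_val p_gt1 hg0 hd0 a0 hcont hode.
have a_pos := solution_gt0 hg0 hd0 a0 hcont hode.
have q_cont := ratio_continuous (i0 := i0) (i1 := i1) hg0 hd0 a0 hcont hode.
have q_deriv := ratio_is_derive i0 i1 hg0 hd0 a0 hcont hode.
have dq_gt0 := ratio_deriv_gt0 hm i0_val i1_val p_gt1 hg0 hd0 a0 hcont hode pr.
have q0 : ((2 ^ m.+1)%:R / ((2 ^ m.+1)%:R - 2)) `^ ((L%:R + 1) / (L%:R - 1)) <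
    a 0 i0 / a 0 i1 by rewrite a0 parity_vec_first // parity_vec_second.
have above := deriv_gt0_above q_cont q_deriv q0 dq_gt0.
exists (fun s => a s i0), (fun s => a s i1); split.
- by move=> t t0; split; apply: a_pos.
- by move=> t i t0; rewrite (a_par t t0).
- move=> s t s0 st; apply: (deriv_gt0_lt q_cont q_deriv s0 st) => x sx _.
  by apply: dq_gt0 (above _ _); [exact: le_lt_trans sx | exact: ltW (le_lt_trans s0 sx)].
- exact: above.
Qed.
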